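(* Let $\mathbf{w}$ be a non-empty finite or infinite LSP word. Then there exist a bLSP morphism $f$ on ${\rm alph}(\mathbf{w})$ and a word $\mathbf{w}'$ (finite if $\mathbf{w}$ is finite, infinite if $\mathbf{w}$ is infinite) such that $\mathbf{w}=f(\mathbf{w}')$.
   Context: A finite word $u$ is a left special factor of a word $w$ if there are distinct letters $x\neq y$ with $xu$ and $yu$ factors of $w$. A word is LSP if every left special factor of it is a prefix of it. ${\rm alph}(w)$ denotes the set of letters occurring in $w$. A bLSP morphism on an alphabet $B$ is an endomorphism $f$ of $B^*$ such that there is a letter $\alpha\in B$ with $f(\alpha)=\alpha$ and, for every letter $\beta\neq\alpha$, there is a letter $\gamma$ with $f(\beta)=f(\gamma)\beta$. *)

From mathcomp Require Import all_boot.
Set Implicit Arguments. Unset Strict Implicit. Unset Printing Implicit Defensive.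

Definition factor_fin (T : eqType) (w u : seq T) : Prop := infix u w.
Definition left_special_fin (T : eqType) (w u : seq T) : Prop :=
  exists x y : T, x <> y /\ factor_fin w (x :: u) /\ factor_fin w (y :: u).
Definition LSP_fin (T : eqType) (w : seq T) : Prop :=
  forall u : seq T, left_special_fin w u -> prefix u w.
Definition alph_fin (T : eqType) (w : seq T) : T -> Prop := fun x => x \in w.

Definition factor_inf (T : Type) (w : nat -> T) (u : seq T) : Prop :=
  exists i, forall j, j < size u -> forall d, w (i + j) = nth d u j.
Definition prefix_inf (T : Type) (w : nat -> T) (u : seq T) : Prop :=
  forall j, j < size u -> forall d, w j = nth d u j.
Definition left_special_inf (T : Type) (w : nat -> T) (u : seq T) : Prop :=
  exists x y : T, x <> y /\ factor_inf w (x :: u) /\ factor_inf w (y :: u).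
Definition LSP_inf (T : Type) (w : nat -> T) : Prop :=
  forall u : seq T, left_special_inf w u -> prefix_inf w u.
Definition alph_inf (T : Type) (w : nat -> T) : T -> Prop := fun x => exists i, w i = x.

(* An endomorphism of B^* is given by the images of the letters of B, which
   must be words over B; it acts on words by concatenation of images. *)
Definition bLSP_morphism (T : eqType) (B : T -> Prop) (f : T -> seq T) : Prop :=
  (forall b, B b -> forall c, c \in f b -> B c) /\
  exists alpha, B alpha /\ f alpha = [:: alpha] /\
    forall beta, B beta -> beta <> alpha ->
      exists gamma, B gamma /\ f beta = f gamma ++ [:: beta].

Definition morph_fin (T : Type) (f : T -> seq T) (w : seq T) : seq T :=
  flatten (map f w).

(* w = f(w') for an infinite word w': for every n, the image of the length-n
   prefix of w' is a prefix of w (images are nonempty for bLSP morphisms, so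
   this determines w). *)
Definition morph_inf_eq (T : Type) (f : T -> seq T) (w' w : nat -> T) : Prop :=
  forall n, prefix_inf w (morph_fin f (mkseq w' n)).

(* Let alpha be the first letter of w.  A letter b <> alpha with two distinct
   left neighbours in w would be a left special factor that is not a prefix, so
   every letter other than alpha has a unique left neighbour.  By induction, the
   block of w running from the last alpha up to an occurrence of a letter x then
   depends only on x; calling it f(x) gives f(alpha) = alpha and
   f(beta) = f(gamma) beta with gamma the left neighbour of beta.  Cutting w just
   before each alpha writes it as the concatenation of the blocks ending there,
   i.e. w = f(w') where w' lists the last letters of these blocks.  For infinite
   w, alpha occurs infinitely often: otherwise the blocks past its last occurrence
   would have pairwise distinct lengths while being determined by finitely many
   letters. *)

From Stdlib Require Import ClassicalEpsilon.
From mathcomp Require Import all_boot zify.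
Set Implicit Arguments. Unset Strict Implicit. Unset Printing Implicit Defensive.

(* A word is read as a function W : nat -> T (a finite word w through nth a w);
   its first letter W 0 plays the role of alpha. *)
Section Blocks.
Variables (T : eqType) (W : nat -> T).

Fixpoint block_start j :=
  if j is i.+1 then (if W i.+1 == W 0 then i.+1 else block_start i) else 0.

Definition block j := map W (iota (block_start j) (j.+1 - block_start j)).

Definition block_ends m := [seq j <- iota 0 m | W j.+1 == W 0].

Definition left_unique N := forall i i', i.+1 < N -> i'.+1 < N ->
  W i.+1 = W i'.+1 -> W i.+1 != W 0 -> W i = W i'.

Lemma block_start_le j : block_start j <= j.
Proof. by elim: j => //= i IH; case: ifP => // _; apply: leqW. Qed.

Lemma size_block j : size (block j) = j.+1 - block_start j.
Proof. by rewrite size_map size_iota. Qed.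

Lemma block_initial j : W j = W 0 -> block j = [:: W 0].
Proof. by case: j => [|i] //= Wj; rewrite /block /= Wj eqxx subSnn /= Wj. Qed.

Lemma block_succ i : W i.+1 != W 0 -> block i.+1 = rcons (block i) (W i.+1).
Proof.
move=> Wi; rewrite /block /= (negbTE Wi) -map_rcons.
have le_start : block_start i <= i.+1 := leqW (block_start_le i).
by rewrite subSn // -addn1 iotaD cats1 subnKC.
Qed.

Lemma mem_block j c : c \in block j -> exists2 k, k <= j & W k = c.
Proof.
rewrite /block => /mapP[k]; rewrite mem_iota subnKC; last exact/leqW/block_start_le.
by case/andP=> _ lt_kj ->; exists k.
Qed.

Lemma mem_block_ends j m : j \in block_ends m -> j < m.
Proof. by rewrite mem_filter mem_iota => /andP[_ /andP[]]. Qed.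

Lemma block_endsS m :
  block_ends m.+1 = block_ends m ++ (if W m.+1 == W 0 then [:: m] else [::]).
Proof. by rewrite /block_ends -{1}[m.+1]addn1 iotaD filter_cat /= add0n; case: ifP. Qed.

Lemma flatten_blocks m :
  flatten [seq block j | j <- block_ends m] ++ block m = mkseq W m.+1.
Proof.
elim: m => [|m IH]; first by rewrite /block.
rewrite mkseqS -IH block_endsS map_cat flatten_cat.
have [Wm|Wm] := eqVneq (W m.+1) (W 0).
  by rewrite block_initial //= cats0 Wm cats1.
by rewrite /= cats0 block_succ // rcons_cat.
Qed.

Lemma block_start_stable j d : (forall i, i < d -> W (j + i.+1) != W 0) ->
  block_start (j + d) = block_start j.
Proof.
elim: d => [|d IH] no_alpha; first by rewrite addn0.
by rewrite addnS /= -addnS (negbTE (no_alpha d _)) // IH // => i /ltnW/no_alpha.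
Qed.

Lemma block_ends_stable j d : (forall i, i < d -> W (j + i.+1) != W 0) ->
  block_ends (j + d) = block_ends j.
Proof.
elim: d => [|d IH] no_alpha; first by rewrite addn0.
rewrite addnS block_endsS -addnS (negbTE (no_alpha d _)) // cats0.
by apply: IH => i /ltnW/no_alpha.
Qed.

End Blocks.

Section BlockMorphism.
Variables (T : eqType) (W : nat -> T) (N : nat).
Hypothesis W_left_unique : left_unique W N.

Lemma block_eq j j' : j < N -> j' < N -> W j = W j' -> block W j = block W j'.
Proof.
elim: j j' => [|i IH] j' lt_iN lt_j'N Wj.
  by rewrite (@block_initial _ _ 0) // (@block_initial _ _ j') ?Wj.
have [Wi|Wi] := eqVneq (W i.+1) (W 0).
  by rewrite (@block_initial _ _ i.+1) // (@block_initial _ _ j') -?Wj.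
case: j' lt_j'N Wj => [|i'] lt_i'N Wi'; first by rewrite Wi' eqxx in Wi.
rewrite block_succ // (@block_succ _ _ i'); last by rewrite -Wi'.
by rewrite Wi' (IH i') ?(ltnW lt_iN) ?(ltnW lt_i'N) ?(W_left_unique lt_iN lt_i'N Wi').
Qed.

Variables (B : T -> Prop) (g : T -> nat).
Hypothesis gP : forall x, B x -> g x < N /\ W (g x) = x.
Hypothesis BW : forall k, k < N -> B (W k).

Lemma block_of_letter j : j < N -> block W (g (W j)) = block W j.
Proof. by move=> lt_jN; have [lt_gN Wg] := gP (BW lt_jN); apply: block_eq. Qed.

Lemma bLSP_block_morphism : 0 < N -> bLSP_morphism B (block W \o g).
Proof.
move=> N_gt0; split.
  move=> b Bb c /mem_block[k le_kg <-]; apply: BW.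
  exact: leq_ltn_trans le_kg (gP Bb).1.
exists (W 0); split; first exact: BW.
split; first by rewrite /= block_of_letter // (@block_initial _ _ 0).
move=> beta Bbeta beta_neq.
rewrite /=; have [] := gP Bbeta; case: (g beta) => [|i] lt_gN Wg.
  by case: beta_neq.
exists (W i); split; first exact/BW/ltnW.
rewrite block_succ ?Wg; last exact/eqP.
by rewrite block_of_letter ?cats1 // ltnW.
Qed.

End BlockMorphism.

Lemma infix_nth_pair (T : eqType) (w : seq T) a i : i.+1 < size w ->
  infix [:: nth a w i; nth a w i.+1] w.
Proof.
move=> lt_iw; apply/infixP; exists (take i w), (drop i.+2 w).
by rewrite -{1}(cat_take_drop i w) (drop_nth a) ?(ltnW lt_iw) // (drop_nth a).
Qed.

Lemma LSP_fin_left_unique (T : eqType) (w : seq T) a :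
  LSP_fin w -> left_unique (nth a w) (size w).
Proof.
move=> lsp i i' lt_iw lt_i'w eq_next; apply: contraNeq => neq_prev.
have : prefix [:: nth a w i.+1] w.
  apply: lsp; exists (nth a w i), (nth a w i'); split; first exact/eqP.
  by split; [|rewrite eq_next]; apply: infix_nth_pair.
by case: w {lsp lt_iw lt_i'w eq_next neq_prev} => [|b s] // /andP[].
Qed.

Lemma LSP_inf_left_unique (T : eqType) (w : nat -> T) N :
  LSP_inf w -> left_unique w N.
Proof.
move=> lsp i i' _ _ eq_next; apply: contraNeq => neq_prev.
have /(_ 0 isT (w 0)) /= <- // : prefix_inf w [:: w i.+1].
apply: lsp; exists (w i), (w i'); split; first exact/eqP.
by split; [exists i | exists i']; case=> [|[]] // _ d /=;
  rewrite ?addn0 ?addn1 ?eq_next.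
Qed.

Lemma LSP_fin_morphic_image (T : eqType) (w : seq T) : w <> [::] -> LSP_fin w ->
  exists f : T -> seq T, bLSP_morphism (alph_fin w) f /\
    exists w' : seq T, (forall x, x \in w' -> alph_fin w x) /\ w = morph_fin f w'.
Proof.
case: w => [//|a s] _ lsp; set w := a :: s; set W := nth a w.
have W_left_unique := LSP_fin_left_unique (a := a) lsp.
have indexP x : alph_fin w x -> index x w < size w /\ W (index x w) = x.
  by move=> wx; rewrite index_mem /W nth_index.
have alph_W k : k < size w -> alph_fin w (W k) by apply: mem_nth.
exists (block W \o index^~ w); split.
  exact: (bLSP_block_morphism W_left_unique indexP alph_W isT).
set ends := rcons (block_ends W (size s)) (size s).
have ends_lt k : k \in ends -> k < size w.
  by rewrite mem_rcons inE => /predU1P[-> | /mem_block_ends /ltnW].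
exists (map W ends); split.
  by move=> x /mapP[k /ends_lt lt_kw ->]; apply: alph_W.
rewrite /morph_fin -map_comp.
have -> : map (block W \o index^~ w \o W) ends = map (block W) ends.
  apply/eq_in_map => k /ends_lt lt_kw.
  exact: (block_of_letter W_left_unique indexP alph_W lt_kw).
rewrite /ends map_rcons flatten_rcons flatten_blocks.
by rewrite -[(size s).+1]/(size w) mkseq_nth.
Qed.

Section InfiniteWord.
Variables (T : finType) (W : nat -> T).
Hypothesis W_left_unique : forall N, left_unique W N.

Lemma block_eq_inf j j' : W j = W j' -> block W j = block W j'.
Proof.
move=> Wj; apply: (block_eq (@W_left_unique (maxn j j').+1) _ _ Wj);
  by rewrite ltnS leq_max leqnn ?orbT.
Qed.

Lemma block_end_after j : exists k, (j <= k) && (W k.+1 == W 0).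
Proof.
have [/existsP[i /eqP Wi] | no_alpha] :=
  boolP [exists i : 'I_#|T|.+1, W (j + i.+1) == W 0].
  by exists (j + i); rewrite leq_addr -addnS Wi eqxx.
have {}no_alpha i : i < #|T|.+1 -> W (j + i.+1) != W 0.
  by move=> lt_i; move: no_alpha; rewrite negb_exists => /forallP/(_ (Ordinal lt_i)).
have size_late_block (i : 'I_#|T|.+1) :
    size (block W (j + i.+1)) = (j + i.+1).+1 - block_start W j.
  rewrite size_block block_start_stable // => k lt_ki.
  exact: no_alpha (leq_trans lt_ki (ltn_ord i)).
have late_inj : injective (fun i : 'I_#|T|.+1 => W (j + i.+1)).
  move=> i i' /block_eq_inf/(congr1 size); rewrite !size_late_block => eq_size.
  by apply: ord_inj; have := block_start_le W j; lia.
by have := leq_card _ late_inj; rewrite card_ord ltnn.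
Qed.

Definition next_block_end j := ex_minn (block_end_after j).

Lemma next_block_endP j : [/\ j <= next_block_end j, W (next_block_end j).+1 = W 0 &
  forall k, j <= k -> k < next_block_end j -> W k.+1 != W 0].
Proof.
rewrite /next_block_end; case: ex_minnP => m /andP[le_jm /eqP Wm] min_m.
split=> // k le_jk lt_km; apply: contraTneq lt_km => Wk.
by rewrite -leqNgt min_m // le_jk Wk eqxx.
Qed.

Fixpoint nth_block_end n :=
  next_block_end (if n is n'.+1 then (nth_block_end n').+1 else 0).

Lemma block_ends_next j : block_ends W (next_block_end j) = block_ends W j.
Proof.
have [le_jn _ no_end] := next_block_endP j.
rewrite -(subnKC le_jn) block_ends_stable // => i lt_i.
by rewrite -addSnnS; apply: no_end; rewrite ?leq_addr // -ltn_subRL.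
Qed.

Lemma nth_block_endP n : W (nth_block_end n).+1 = W 0.
Proof.
case: n => [|n]; first by case: (next_block_endP 0).
by case: (next_block_endP (nth_block_end n).+1).
Qed.

Lemma block_ends_nth n : block_ends W (nth_block_end n) = mkseq nth_block_end n.
Proof.
elim: n => [|n IH] /=; first exact: block_ends_next.
by rewrite block_ends_next block_endsS nth_block_endP eqxx IH mkseqS cats1.
Qed.

End InfiniteWord.

Lemma prefix_inf_mkseq (T : Type) (w : nat -> T) u v m :
  u ++ v = mkseq w m -> prefix_inf w u.
Proof.
move=> uv j lt_ju d.
have lt_jm : j < m by rewrite -(size_mkseq w m) -uv size_cat ltn_addr.
by rewrite -(nth_mkseq d w lt_jm) -uv nth_cat lt_ju.
Qed.

Lemma LSP_inf_morphic_image (T : finType) (w : nat -> T) : LSP_inf w ->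
  exists f : T -> seq T, bLSP_morphism (alph_inf w) f /\
    exists w' : nat -> T, (forall i, alph_inf w (w' i)) /\ morph_inf_eq f w' w.
Proof.
move=> lsp; have w_left_unique N : left_unique w N := LSP_inf_left_unique (N := N) lsp.
pose g x := epsilon (inhabits 0) (fun i => w i = x).
have gP x : alph_inf w x -> w (g x) = x := epsilon_spec _ _.
pose N := \max_(x : T) (g x).+1.
exists (block w \o g); split.
  apply: (bLSP_block_morphism (w_left_unique N)) => [x /gP wg | k _ | ].
  - by split; [apply: leq_bigmax | ].
  - by exists k.
  - exact: leq_trans (leq_bigmax (w 0)).
exists (w \o nth_block_end w_left_unique); split; first by move=> i; eexists.
move=> n; rewrite /morph_fin.
have -> : map (block w \o g) (mkseq (w \o nth_block_end w_left_unique) n) =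
          map (block w) (mkseq (nth_block_end w_left_unique) n).
  rewrite /mkseq -!map_comp; apply: eq_map => i /=.
  by apply: (block_eq_inf w_left_unique); apply: gP; eexists.
by rewrite -block_ends_nth; apply: prefix_inf_mkseq (flatten_blocks _ _).
Qed.

Theorem lemma1 (T : finType) :
  (forall w : seq T, w <> [::] -> LSP_fin w ->
     exists f : T -> seq T, bLSP_morphism (alph_fin w) f /\
       exists w' : seq T, (forall x, x \in w' -> alph_fin w x) /\ w = morph_fin f w')
  /\
  (forall w : nat -> T, LSP_inf w ->
     exists f : T -> seq T, bLSP_morphism (alph_inf w) f /\
       exists w' : nat -> T, (forall i, alph_inf w (w' i)) /\ morph_inf_eq f w' w).
Proof. by split=> w; [apply: LSP_fin_morphic_image | apply: LSP_inf_morphic_image]. Qed.
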